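(* Let $C_n=[U_n,[U_{n-1},\dots,[U_2,U_1]\dots]]$ be any grade-$n$ nested commutator in which each $U_j$ is either $h\partial_x^2$ or $h^{-1}V(x)$ (with $V$ smooth). Let $O_q=y_q(x)h^q\partial_x^q$ be an observable with $y_q$ smooth, so that $\mathrm{ht}(O_q)=\mathrm{wd}(O_q)=q$. Then $$\mathrm{ht}([C_n,O_q])\le\mathrm{wd}([C_n,O_q]).$$
   Context: $\mathcal{L}_h$ is the set of differential operators $\sum_{k=0}^n y_k(x)h^{m_k}\partial_x^{d_k}$ ($n,d_k\in\mathbb{N}$, $m_k\in\mathbb{Z}$, $y_k$ smooth). For $P\in\mathcal{L}_h$: $\mathrm{ht}(P)=\max\{d: h^m\partial_x^d\text{ appears in }P\}$, $\mathrm{wd}(P)=\min\{m: h^m\partial_x^d\text{ appears in }P\}$, with $\mathrm{ht}(0)=0$, $\mathrm{wd}(0)=\infty$. *)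

From Stdlib Require Import Reals ZArith List ClassicalEpsilon.
From Coquelicot Require Import Coquelicot.
Import ListNotations.
Open Scope R_scope.

Definition smooth (f : R -> R) : Prop := forall (n : nat) (x : R), ex_derive_n f n x.

(* A term  y(x) h^m d_x^d  is represented by the triple (m, d, y).
   An operator of L_h is a formal finite sum of such terms, with h a formal
   parameter and the coefficients always written to the left of d_x. *)
Definition term : Type := (Z * nat * (R -> R))%type.
Definition op : Type := list term.

Definition t_m (t : term) : Z := fst (fst t).
Definition t_d (t : term) : nat := snd (fst t).
Definition t_c (t : term) : R -> R := snd t.

(* Composition of two monomials, via Leibniz' rule:
   (a h^m1 d^d1)(b h^m2 d^d2) = sum_k C(d1,k) a b^(k) h^(m1+m2) d^(d1-k+d2). *)
Definition mul_term (s t : term) : op :=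
  map (fun k => ((t_m s + t_m t)%Z, (t_d s - k + t_d t)%nat,
                 fun x => Binomial.C (t_d s) k * t_c s x * Derive_n (t_c t) k x))
      (seq 0 (S (t_d s))).

Definition op_add (P Q : op) : op := P ++ Q.
Definition op_opp (P : op) : op := map (fun t => (fst t, fun x => - t_c t x)) P.
Definition op_mul (P Q : op) : op :=
  flat_map (fun s => flat_map (fun t => mul_term s t) Q) P.
Definition op_comm (P Q : op) : op := op_add (op_mul P Q) (op_opp (op_mul Q P)).

Definition coef (P : op) (m : Z) (d : nat) (x : R) : R :=
  fold_right Rplus 0
    (map (fun t => if (Z.eq_dec (t_m t) m) then
                     if Nat.eq_dec (t_d t) d then t_c t x else 0
                   else 0) P).

Definition appears (P : op) (m : Z) (d : nat) : Prop := exists x, coef P m d x <> 0.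

(* ht(P) = max { d : h^m d^d appears in P }, with ht(0) = 0. *)
Definition ht (P : op) : nat :=
  fold_right (fun t acc =>
     if excluded_middle_informative (appears P (t_m t) (t_d t))
     then Nat.max (t_d t) acc else acc) 0%nat P.

(* wd(P) = min { m : h^m d^d appears in P }, with wd(0) = +infinity. *)
Definition wd (P : op) : Rbar :=
  fold_right (fun t acc =>
     if excluded_middle_informative (appears P (t_m t) (t_d t))
     then Rbar_min (Finite (IZR (t_m t))) acc else acc) p_infty P.

Definition kin : op := [(1%Z, 2%nat, fun _ => 1)].
Definition pot (V : R -> R) : op := [((-1)%Z, 0%nat, V)].
Definition obs (y : R -> R) (q : nat) : op := [(Z.of_nat q, q, y)].

Fixpoint nested (U : nat -> op) (n : nat) : op :=
  match n with
  | O => []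
  | S O => U 1%nat
  | S k => op_comm (U (S k)) (nested U k)
  end.

(* Call a term y h^m d^d of h-degree m and excess d - m.  Every term of
   h d^2 and of h^-1 V has excess at most 1, and O_q has excess 0.  In a
   commutator [P, Q] of operators homogeneous in h, the top Leibniz terms
   a b h^(m1+m2) d^(d1+d2) of PQ and of QP coincide and cancel, and all
   remaining terms lose at least one derivative; so [P, Q] is again
   homogeneous and its excess bound is B1 + B2 - 1.  Hence [C_n, O_q] is
   homogeneous of some h-degree M with excess at most 0: wd = M >= ht. *)

From Stdlib Require Import Reals ZArith List.
From Coquelicot Require Import Coquelicot.
From Stdlib Require Import Permutation Lia Lra FunctionalExtensionality ClassicalEpsilon.
Import ListNotations.
Open Scope R_scope.

Lemma fold_right_Rplus_shift (l : list R) (a : R) :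
  fold_right Rplus a l = fold_right Rplus 0 l + a.
Proof. induction l as [|r l IH]; simpl; [lra | rewrite IH; lra]. Qed.

Lemma coef_app P Q m d x : coef (P ++ Q) m d x = coef P m d x + coef Q m d x.
Proof. unfold coef. rewrite map_app, fold_right_app, fold_right_Rplus_shift. lra. Qed.

Lemma coef_opp P m d x : coef (op_opp P) m d x = - coef P m d x.
Proof.
  unfold coef, op_opp. induction P as [|[[a k] f] P IH]; simpl; [lra|].
  rewrite IH. unfold t_m, t_d, t_c; simpl.
  destruct (Z.eq_dec a m), (Nat.eq_dec k d); lra.
Qed.

Lemma coef_perm P Q m d x : Permutation P Q -> coef P m d x = coef Q m d x.
Proof. intro H; induction H; unfold coef in *; simpl; lra. Qed.

Lemma coef_neq0_In P m d x : coef P m d x <> 0 ->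
  exists t, In t P /\ t_m t = m /\ t_d t = d.
Proof.
  induction P as [|t P IH]; unfold coef; simpl; intro H; [lra|].
  destruct (Z.eq_dec (t_m t) m); [destruct (Nat.eq_dec (t_d t) d)|].
  - exists t; auto.
  - destruct IH as [u Hu]; [unfold coef; lra | exists u; tauto].
  - destruct IH as [u Hu]; [unfold coef; lra | exists u; tauto].
Qed.

Lemma op_opp_app A B : op_opp (A ++ B) = op_opp A ++ op_opp B.
Proof. apply map_app. Qed.

Lemma op_oppK A : op_opp (op_opp A) = A.
Proof.
  unfold op_opp. rewrite map_map. rewrite <- (map_id A) at 2. apply map_ext.
  intros [a f]. unfold t_c; simpl. f_equal. extensionality x. lra.
Qed.

#[local] Instance op_opp_Permutation :
  Morphisms.Proper (Morphisms.respectful (@Permutation term) (@Permutation term)) op_opp.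
Proof. intros A B H. apply Permutation_map, H. Qed.

Lemma op_opp_flat_map {A} (f : A -> op) l :
  op_opp (flat_map f l) = flat_map (fun a => op_opp (f a)) l.
Proof. induction l as [|a l IH]; simpl; [reflexivity | rewrite op_opp_app, IH; reflexivity]. Qed.

Lemma flat_map_app_Permutation {A B} (f g : A -> list B) (l : list A) :
  Permutation (flat_map (fun a => f a ++ g a) l) (flat_map f l ++ flat_map g l).
Proof.
  induction l as [|a l IH]; simpl; [reflexivity|].
  rewrite <- !app_assoc. apply Permutation_app_head.
  rewrite IH, !app_assoc. apply Permutation_app_tail, Permutation_app_comm.
Qed.

Lemma flat_map_Permutation_ext {A B} (f g : A -> list B) (l : list A) :
  (forall a, Permutation (f a) (g a)) -> Permutation (flat_map f l) (flat_map g l).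
Proof. intro H; induction l; simpl; [reflexivity | apply Permutation_app; auto]. Qed.

Lemma flat_map_map_swap {A B C} (f : A -> B -> C) (l1 : list A) (l2 : list B) :
  Permutation (flat_map (fun a => map (f a) l2) l1)
              (flat_map (fun b => map (fun a => f a b) l1) l2).
Proof.
  revert l2. induction l1 as [|a l1 IH]; intro l2; simpl.
  - induction l2; simpl; auto.
  - rewrite IH. clear IH. induction l2 as [|b l2 IH]; simpl; [reflexivity|].
    apply perm_skip. rewrite <- IH, !app_assoc.
    apply Permutation_app_tail, Permutation_app_comm.
Qed.

Lemma op_mul_Permutation_l A A' B :
  Permutation A A' -> Permutation (op_mul A B) (op_mul A' B).
Proof. intro H. apply Permutation_flat_map, H. Qed.

Lemma op_mul_Permutation_r A B B' :
  Permutation B B' -> Permutation (op_mul A B) (op_mul A B').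
Proof.
  intro H. apply flat_map_Permutation_ext. intro s. apply Permutation_flat_map, H.
Qed.

Lemma op_mulDl A A' B : op_mul (A ++ A') B = op_mul A B ++ op_mul A' B.
Proof. apply flat_map_app. Qed.

Lemma op_mulDr A B B' : Permutation (op_mul A (B ++ B')) (op_mul A B ++ op_mul A B').
Proof.
  unfold op_mul. rewrite <- flat_map_app_Permutation. apply flat_map_Permutation_ext.
  intro s. rewrite flat_map_app. reflexivity.
Qed.

Lemma op_mulNl A B : op_mul (op_opp A) B = op_opp (op_mul A B).
Proof.
  unfold op_mul. rewrite op_opp_flat_map. unfold op_opp at 1.
  rewrite flat_map_concat_map, map_map, <- flat_map_concat_map.
  apply flat_map_ext. intro s. rewrite op_opp_flat_map. apply flat_map_ext. intro t.
  unfold mul_term, op_opp. rewrite map_map. apply map_ext. intro k.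
  unfold t_m, t_d, t_c; simpl. f_equal. extensionality x. lra.
Qed.

Lemma op_mulNr A B : op_mul A (op_opp B) = op_opp (op_mul A B).
Proof.
  unfold op_mul. rewrite op_opp_flat_map. apply flat_map_ext. intro s.
  rewrite op_opp_flat_map. unfold op_opp at 1.
  rewrite flat_map_concat_map, map_map, <- flat_map_concat_map.
  apply flat_map_ext. intro t.
  unfold mul_term, op_opp. rewrite map_map. apply map_ext. intro k.
  unfold t_m, t_d, t_c; simpl. f_equal. extensionality x. rewrite Derive_n_opp. lra.
Qed.

Definition cancelling (Z0 : op) : Prop := exists W, Permutation Z0 (W ++ op_opp W).

Lemma coef_cancelling Z0 m d x : cancelling Z0 -> coef Z0 m d x = 0.
Proof.
  intros [W HW]. rewrite (coef_perm _ _ m d x HW), coef_app, coef_opp. lra.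
Qed.

Lemma cancelling_app A B : cancelling A -> cancelling B -> cancelling (A ++ B).
Proof.
  intros [W HW] [W' HW']. exists (W ++ W').
  rewrite op_opp_app, HW, HW', <- !app_assoc.
  apply Permutation_app_head, Permutation_app_swap_app.
Qed.

Lemma cancelling_opp A : cancelling A -> cancelling (op_opp A).
Proof.
  intros [W HW]. exists W. rewrite HW, op_opp_app, op_oppK. apply Permutation_app_comm.
Qed.

Lemma cancelling_mul_l Z0 B : cancelling Z0 -> cancelling (op_mul Z0 B).
Proof.
  intros [W HW]. exists (op_mul W B).
  rewrite (op_mul_Permutation_l _ _ B HW), op_mulDl, op_mulNl. reflexivity.
Qed.

Lemma cancelling_mul_r A Z0 : cancelling Z0 -> cancelling (op_mul A Z0).
Proof.
  intros [W HW]. exists (op_mul A W).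
  rewrite (op_mul_Permutation_r A _ _ HW), op_mulDr, op_mulNr. reflexivity.
Qed.

Lemma op_mul_cancelling R1 Z1 R2 Z2 : cancelling Z1 -> cancelling Z2 ->
  exists Z0, cancelling Z0 /\ Permutation (op_mul (R1 ++ Z1) (R2 ++ Z2)) (op_mul R1 R2 ++ Z0).
Proof.
  intros H1 H2. exists (op_mul R1 Z2 ++ op_mul Z1 (R2 ++ Z2)). split.
  - apply cancelling_app; [apply cancelling_mul_r | apply cancelling_mul_l]; assumption.
  - rewrite op_mulDl, op_mulDr, app_assoc. reflexivity.
Qed.

Definition lead_term (s t : term) : term :=
  ((t_m s + t_m t)%Z, (t_d s + t_d t)%nat, fun x => t_c s x * t_c t x).

Definition lower_terms (s t : term) : op :=
  map (fun k => ((t_m s + t_m t)%Z, (t_d s - k + t_d t)%nat,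
                 fun x => Binomial.C (t_d s) k * t_c s x * Derive_n (t_c t) k x))
      (seq 1 (t_d s)).

Lemma mul_term_lead s t : mul_term s t = lead_term s t :: lower_terms s t.
Proof.
  unfold mul_term, lead_term. simpl. rewrite Nat.sub_0_r.
  apply (f_equal2 cons); [apply (f_equal2 pair); [reflexivity|] | reflexivity].
  extensionality x. rewrite C_n_0. lra.
Qed.

Lemma lead_termC s t : lead_term t s = lead_term s t.
Proof.
  unfold lead_term. rewrite Z.add_comm, Nat.add_comm. f_equal.
  extensionality x. apply Rmult_comm.
Qed.

Definition op_lead (A B : op) : op := flat_map (fun s => map (lead_term s) B) A.
Definition op_lower (A B : op) : op := flat_map (fun s => flat_map (lower_terms s) B) A.

Lemma op_mul_lead (A B : op) : Permutation (op_mul A B) (op_lead A B ++ op_lower A B).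
Proof.
  unfold op_mul, op_lead, op_lower. rewrite <- flat_map_app_Permutation.
  apply flat_map_Permutation_ext. intro s.
  induction B as [|t B IH]; cbn [flat_map map]; [reflexivity|].
  rewrite mul_term_lead. simpl. apply perm_skip.
  rewrite IH. apply Permutation_app_swap_app.
Qed.

Lemma op_leadC A B : Permutation (op_lead B A) (op_lead A B).
Proof.
  unfold op_lead. rewrite flat_map_map_swap. apply flat_map_Permutation_ext. intro s.
  erewrite map_ext; [reflexivity | intro t; apply lead_termC].
Qed.

Definition graded (M B : Z) (t : term) : Prop :=
  t_m t = M /\ (Z.of_nat (t_d t) - t_m t <= B)%Z.

Definition graded_op (M B : Z) (P : op) : Prop :=
  exists R0 Z0, cancelling Z0 /\ Permutation P (R0 ++ Z0) /\ List.Forall (graded M B) R0.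

Lemma graded_op_single M B t : graded M B t -> graded_op M B [t].
Proof.
  intro H. exists [t], []. repeat split.
  - exists []. reflexivity.
  - rewrite app_nil_r. reflexivity.
  - constructor; auto.
Qed.

Lemma Forall_graded_opp M B A : List.Forall (graded M B) A -> List.Forall (graded M B) (op_opp A).
Proof. intro H. apply Forall_map. exact H. Qed.

Lemma graded_op_lower M1 B1 M2 B2 A B :
  List.Forall (graded M1 B1) A -> List.Forall (graded M2 B2) B ->
  List.Forall (graded (M1 + M2) (B1 + B2 - 1)) (op_lower A B).
Proof.
  rewrite !Forall_forall. intros HA HB u Hu.
  apply in_flat_map in Hu as [s [Hs Hu]]. apply in_flat_map in Hu as [t [Ht Hu]].
  apply in_map_iff in Hu as [k [<- Hk]]. apply in_seq in Hk.
  destruct (HA s Hs) as [Ms Bs], (HB t Ht) as [Mt Bt].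
  unfold graded, t_m, t_d in *; simpl in *. split; [lia|].
  rewrite Nat2Z.inj_add, Nat2Z.inj_sub by lia. lia.
Qed.

Lemma Permutation_app_shuffle6 {T} (a b c d e f : list T) :
  Permutation (a ++ b ++ c ++ d ++ e ++ f) (b ++ e ++ a ++ d ++ c ++ f).
Proof.
  rewrite (Permutation_app_swap_app a b). apply Permutation_app_head.
  rewrite (app_assoc a c), (app_assoc (a ++ c) d), (Permutation_app_swap_app _ e).
  apply Permutation_app_head. rewrite <- !app_assoc. apply Permutation_app_head.
  apply Permutation_app_swap_app.
Qed.

Lemma graded_op_comm M1 B1 M2 B2 P Q : graded_op M1 B1 P -> graded_op M2 B2 Q ->
  graded_op (M1 + M2) (B1 + B2 - 1) (op_comm P Q).
Proof.
  intros [R1 [Z1 [HZ1 [HP HR1]]]] [R2 [Z2 [HZ2 [HQ HR2]]]].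
  destruct (op_mul_cancelling R1 Z1 R2 Z2 HZ1 HZ2) as [Za [HZa HPQ]].
  destruct (op_mul_cancelling R2 Z2 R1 Z1 HZ2 HZ1) as [Zb [HZb HQP]].
  exists (op_lower R1 R2 ++ op_opp (op_lower R2 R1)),
         ((op_lead R1 R2 ++ op_opp (op_lead R2 R1)) ++ Za ++ op_opp Zb).
  repeat split.
  - apply cancelling_app; [|apply cancelling_app; [|apply cancelling_opp]; assumption].
    exists (op_lead R1 R2). rewrite op_leadC. reflexivity.
  - unfold op_comm, op_add.
    rewrite (op_mul_Permutation_l _ _ Q HP), (op_mul_Permutation_r _ _ _ HQ), HPQ.
    rewrite (op_mul_Permutation_l _ _ P HQ), (op_mul_Permutation_r _ _ _ HP), HQP.
    rewrite (op_mul_lead R1 R2), (op_mul_lead R2 R1), !op_opp_app, <- !app_assoc.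
    apply Permutation_app_shuffle6.
  - apply Forall_app. split.
    + apply graded_op_lower; assumption.
    + rewrite (Z.add_comm M1), (Z.add_comm B1).
      apply Forall_graded_opp, graded_op_lower; assumption.
Qed.

Lemma graded_op_nested (U : nat -> op) (n : nat) :
  (forall j, exists M, graded_op M 1 (U j)) -> (1 <= n)%nat ->
  exists M, graded_op M 1 (nested U n).
Proof.
  intro HU. induction n as [|[|n] IH]; intro Hn; [lia | apply HU|].
  destruct IH as [M2 H2]; [lia|]. destruct (HU (S (S n))) as [M1 H1].
  exists (M1 + M2)%Z. exact (graded_op_comm _ _ _ _ _ _ H1 H2).
Qed.

Lemma appears_graded_op M B P m d : graded_op M B P -> appears P m d ->
  m = M /\ (Z.of_nat d - m <= B)%Z.
Proof.
  intros [R0 [Z0 [HZ [HP HR]]]] [x Hx].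
  rewrite (coef_perm _ _ m d x HP), coef_app, (coef_cancelling Z0 m d x HZ), Rplus_0_r in Hx.
  destruct (coef_neq0_In _ _ _ _ Hx) as [t [Ht [<- <-]]].
  rewrite Forall_forall in HR. apply HR, Ht.
Qed.

Lemma ht_le_wd_homogeneous (P : op) (M : Z) :
  (forall m d, appears P m d -> m = M /\ (Z.of_nat d <= M)%Z) ->
  Rbar_le (INR (ht P)) (wd P).
Proof.
  (* Abstracting [appears P] frees the list [P] for induction. *)
  intro Hhom. unfold ht, wd. set (A := appears P) in Hhom |- *. clearbody A.
  match goal with |- Rbar_le (Finite (INR ?h)) ?w =>
    enough (Hcases : (h = 0%nat /\ w = p_infty) \/
                     (w = Finite (IZR M) /\ (Z.of_nat h <= M)%Z)) end.
  { destruct Hcases as [[-> ->] | [-> Hh]]; simpl; [exact I|].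
    rewrite INR_IZR_INZ. apply IZR_le, Hh. }
  induction P as [|t P IH]; cbn [fold_right]; [left; auto|].
  destruct (excluded_middle_informative (A (t_m t) (t_d t))) as [Ht|Ht]; [|exact IH].
  destruct (Hhom _ _ Ht) as [-> Hd]. right.
  destruct IH as [[-> ->] | [-> Hh]]; split; try lia; [reflexivity|].
  unfold Rbar_min. simpl. f_equal. apply Rmin_left. lra.
Qed.

Theorem lemma4p2 (V y : R -> R) (hV : smooth V) (hy : smooth y)
  (n q : nat) (hn : (2 <= n)%nat) (b : nat -> bool) :
  let U := fun j : nat => if b j then kin else pot V in
  Rbar_le (INR (ht (op_comm (nested U n) (obs y q))))
          (wd (op_comm (nested U n) (obs y q))).
Proof.
  intro U.
  assert (HU : forall j, exists M, graded_op M 1 (U j)).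
  { intro j. unfold U. destruct (b j); [exists 1%Z | exists (-1)%Z];
      apply graded_op_single; unfold graded, t_m, t_d; simpl; lia. }
  destruct (graded_op_nested U n HU ltac:(lia)) as [M HC].
  assert (HO : graded_op (Z.of_nat q) 0 (obs y q)).
  { apply graded_op_single. unfold graded, t_m, t_d; simpl. lia. }
  pose proof (graded_op_comm _ _ _ _ _ _ HC HO) as Hcomm.
  apply (ht_le_wd_homogeneous _ (M + Z.of_nat q)).
  intros m d Hap. destruct (appears_graded_op _ _ _ _ _ Hcomm Hap). split; lia.
Qed.
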